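(* Let $\{U_N(i)\}_{i=1}^{M_N}$, $N\ge1$, be a triangular array and $\{\mathcal F_N\}$ a filtration as described. Assume there exist nonnegative random variables $V_N,X_N,Y_N$ such that (i) $\max_{i\le M_N}|U_N(i)|\le V_N+X_NY_N^2$ a.s. for all $N$; (ii) $V_N$ and $X_N$ are $\mathcal F_N$-measurable, $V_N\to0$ in probability, and $\lim_{\lambda\to\infty}\sup_N\mathbb P(X_N\ge\lambda)=0$; (iii) for some $\alpha\in\{1,2\}$, $\nu>0$, $c>0$, $C>0$, a.s. for all $y>0$ and $N$, $\mathbb P(Y_N\ge y\mid\mathcal F_N)\le CM_N\exp(-cM_N^{\nu}y^{2\alpha})$. Then for $p\in\{1,2\}$: if $\lim_{\lambda\to\infty}\sup_N\mathbb P\big(\sum_{i=1}^{M_N}\mathbb E[|U_N(i)|^p\mid\mathcal F_N]\ge\lambda\big)=0$, then for every $\varepsilon>0$, $$\sum_{i=1}^{M_N}\mathbb E\big[|U_N(i)|^p\mathbf 1\{|U_N(i)|\ge\varepsilon\}\mid\mathcal F_N\big]\to0\quad\text{in probability as }N\to\infty.$$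
   Context: $(\Omega,\mathcal A,\{\mathcal F_N\}_{N\ge0},\mathbb P)$ is a filtered probability space and $\{M_N\}$ a sequence of positive integers with $M_N\to\infty$. For each $N$, $U_N(1),\dots,U_N(M_N)$ are real random variables that are conditionally independent given $\mathcal F_N$ with $\mathbb E[|U_N(i)|\mid\mathcal F_N]<\infty$ a.s. (and $\mathbb E[U_N(i)^2\mid\mathcal F_N]<\infty$ a.s. when $p=2$). *)

From HB Require Import structures.
From mathcomp Require Import all_boot all_order all_algebra.
From mathcomp Require Import all_classical all_reals all_analysis measurable_realfun.
Set Implicit Arguments. Unset Strict Implicit. Unset Printing Implicit Defensive.
Import Order.TTheory GRing.Theory Num.Theory.
Import numFieldNormedType.Exports.
Local Open Scope classical_set_scope.
Local Open Scope ring_scope.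

Definition sub_sigma_algebra d (T : measurableType d) (G : set (set T)) :=
  sigma_algebra setT G /\ G `<=` measurable.

Definition filtration d (T : measurableType d) (F : nat -> set (set T)) :=
  (forall N, sub_sigma_algebra (F N)) /\ (forall N, F N `<=` F N.+1).

Definition G_measurable d (T : measurableType d) (R : realType)
  (G : set (set T)) (Z : T -> \bar R) :=
  forall B : set (\bar R), measurable B -> G (Z @^-1` B).

(** [Z] is a version of the conditional expectation E[X | G], for a
    nonnegative (extended-real valued) random variable X:
    Z is G-measurable and int_A Z dP = int_A X dP for every A in G. *)
Definition is_cond_exp d (T : measurableType d) (R : realType)
  (P : probability T R) (G : set (set T)) (X Z : T -> \bar R) :=
  G_measurable G Z /\
  forall A, G A -> (\int[P]_(x in A) Z x = \int[P]_(x in A) X x)%E.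

Definition cond_exp_finite d (T : measurableType d) (R : realType)
  (P : probability T R) (G : set (set T)) (X : T -> \bar R) :=
  forall Z, is_cond_exp P G X Z -> {ae P, forall x, (Z x < +oo)%E}.

(** Conditional independence of X_0, ..., X_{n-1} given G:
    for all Borel sets B_i, P(cap_i {X_i in B_i} | G) = prod_i P(X_i in B_i | G)
    a.s. (stated as: the product of any versions of the conditional
    probabilities is a version of the joint conditional probability). *)
Definition cond_indep d (T : measurableType d) (R : realType)
  (P : probability T R) (G : set (set T)) (n : nat) (X : 'I_n -> T -> R) :=
  forall (B : 'I_n -> set R), (forall i, measurable (B i)) ->
  forall q : 'I_n -> T -> \bar R,
    (forall i, is_cond_exp P G (fun x => (\1_(X i @^-1` B i) x)%:E) (q i)) ->
    is_cond_exp P G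
      (fun x => (\1_(\bigcap_(i in [set: 'I_n]) (X i @^-1` B i)) x)%:E)
      (fun x => (\prod_(i < n) q i x)%E).

Definition cvg_in_prob0 d (T : measurableType d) (R : realType)
  (P : probability T R) (Z : nat -> T -> \bar R) :=
  forall delta : R, 0 < delta ->
    (fun N => P [set x | (delta%:E <= `|Z N x|)%E]) @ \oo --> 0%E.

Definition tight d (T : measurableType d) (R : realType)
  (P : probability T R) (Z : nat -> T -> \bar R) :=
  (fun lambda : R =>
     ereal_sup [set P [set x | (lambda%:E <= Z N x)%E] | N in [set: nat]])
  @ +oo --> 0%E.

(* On the F_N-measurable event {V_N < eps/2, X_N < K}, whose complement has
   small probability by (ii), |U_N(i)| >= eps forces Y_N >= y0 := sqrt(eps/2K),
   and |U_N(i)|^p is at most a constant times exp(4 Y_N).  Slicing Y_N into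
   unit layers above y0 and applying the conditional tail bound (iii) on each
   layer bounds every E[|U_N(i)|^p 1{|U_N(i)| >= eps} | F_N] on that event by
   C' M_N exp(-c M_N^nu y0^(2 alpha) / 2), so the sum over i <= M_N is
   O(M_N^2 exp(-c' M_N^nu)) and Markov's inequality concludes. *)

From Pilot Require Import Defs.
From HB Require Import structures.
From mathcomp Require Import all_boot all_order all_algebra.
From mathcomp Require Import all_classical all_reals all_analysis measurable_realfun.
From mathcomp Require Import lra ring.
Set Implicit Arguments. Unset Strict Implicit. Unset Printing Implicit Defensive.
Import Order.TTheory GRing.Theory Num.Theory.
Import numFieldNormedType.Exports.
Local Open Scope classical_set_scope.
Local Open Scope ring_scope.

Section SubSigmaAlgebra.
Context d (T : measurableType d) (G : set (set T)).
Hypothesis subG : Defs.sub_sigma_algebra G.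

Lemma sub_sigma_algebra_measurable A : G A -> measurable A.
Proof. by case: subG => _; apply. Qed.

Lemma sub_sigma_algebraI A B : G A -> G B -> G (A `&` B).
Proof.
have [_ _ _] := (sigma_algebraP (fun A _ => @subsetT _ A)).1 (proj1 subG).
exact.
Qed.

Lemma G_measurable_fun (R : realType) (Z : T -> \bar R) :
  G_measurable G Z -> measurable_fun setT Z.
Proof. by move=> GZ _ B mB; rewrite setTI; apply/sub_sigma_algebra_measurable/GZ. Qed.

Lemma G_preimage_measurable_fun (R : realType) (f : T -> R) :
  (forall B, measurable B -> G (f @^-1` B)) -> measurable_fun setT f.
Proof. by move=> Gf _ B mB; rewrite setTI; apply/sub_sigma_algebra_measurable/Gf. Qed.

End SubSigmaAlgebra.

Section Asymptotics.
Context (R : realType).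

Lemma nonneg_cvge0P {I} (F : set_system I) {FF : Filter F} (u : I -> \bar R) :
  (forall t, (0 <= u t)%E) ->
  u @ F --> 0%E <-> forall e : R, 0 < e -> \forall t \near F, (u t <= e%:E)%E.
Proof.
move=> u0; split=> [/fine_cvgP [ufin /cvgr0Pnorm_le u0F] e e0|ule].
  apply: filterS2 ufin (u0F e e0) => t ut; rewrite -(fineK ut) lee_fin.
  by rewrite /= ger0_norm // fine_ge0.
apply/fine_cvgP; split.
  apply: filterS (ule 1 ltr01) => t ut1.
  by rewrite ge0_fin_numE // (le_lt_trans ut1) // ltey.
apply/cvgr0Pnorm_le => e e0; apply: filterS2 (ule e e0) (ule 1 ltr01) => t ute ut1.
have ut : u t \is a fin_num by rewrite ge0_fin_numE // (le_lt_trans ut1) // ltey.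
by rewrite /= ger0_norm ?fine_ge0 // -lee_fin fineK.
Qed.

Lemma tight_le d (T : measurableType d) (P : probability T R) (Z : nat -> T -> \bar R) :
  tight P Z -> forall e : R, 0 < e ->
  exists2 K : R, 0 < K & forall N, (P [set x | (K%:E <= Z N x)%E] <= e%:E)%E.
Proof.
move=> /nonneg_cvge0P tZ e e0.
have /tZ /(_ e e0) Zsmall : forall l : R,
    (0 <= ereal_sup [set P [set x | (l%:E <= Z N x)%E] | N in [set: nat]])%E.
  move=> l; apply: le_trans (ereal_sup_ubound _); last by exists 0%N.
  exact: measure_ge0.
have [K [K0 ZK]] := filter_ex
  (filterS2 _ (fun K K0 ZK => conj K0 ZK) (nbhs_pinfty_gt (num_real 0)) Zsmall).
by exists K => // N; apply: le_trans ZK; apply: ereal_sup_ubound; exists N.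
Qed.

Lemma powR_nat_near_oo (nu L : R) : 0 < nu -> \forall n \near \oo, L <= n%:R `^ nu.
Proof.
move=> nu0; set L' := Num.max L 1.
apply: filterS (nbhs_infty_ger (L' `^ nu^-1)) => n Ln.
have L'1 : 1 <= L' by rewrite le_max lexx orbT.
apply: (@le_trans _ _ L'); first by rewrite le_max lexx.
apply: (@le_trans _ _ ((L' `^ nu^-1) `^ nu)).
  by rewrite -powRrM mulVf ?gt_eqF // powRr1 //; lra.
by apply: ge0_ler_powR; rewrite ?nnegrE ?powR_ge0 ?ler0n // ltW.
Qed.

Lemma near_oo_comp (M : nat -> nat) (Q : nat -> Prop) :
  (forall K, exists N0, forall N, (N0 <= N)%N -> (K <= M N)%N) ->
  (\forall n \near \oo, Q n) -> \forall N \near \oo, Q (M N).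
Proof. by move=> Moo [n0 _ Qn]; have [N0 MN0] := Moo n0; exists N0 => // N /MN0 /Qn. Qed.

End Asymptotics.

Section RealBounds.
Context (R : realType).

Lemma exprn_le_sqr (u B : R) (p : nat) :
  0 <= u -> u <= B -> 1 <= B -> (p <= 2)%N -> u ^+ p <= B ^+ 2.
Proof.
move=> u0 uB B1 p2; apply: (@le_trans _ _ (B ^+ p)).
  by rewrite lerXn2r // nnegrE (le_trans u0).
exact: ler_weXn2l.
Qed.

Lemma exprD1_le_expR (y : R) (n : nat) : 0 <= y -> (1 + y) ^+ n <= expR (n%:R * y).
Proof.
move=> y0; rewrite expRM_natl; apply: lerXn2r; rewrite ?nnegrE ?expR_ge0 ?addr_ge0 //.
exact: expR_ge1Dx.
Qed.

Lemma expR_Nnat_le_invX (k : nat) : expR (- k%:R) <= (2 ^+ k)^-1 :> R.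
Proof.
rewrite expRN -[k%:R]mulr1 expRM_natl lef_pV2 ?posrE ?exprn_gt0 ?expR_gt0 //.
apply: lerXn2r; rewrite ?nnegrE ?expR_ge0 //.
by have := expR_ge1Dx (1 : R).
Qed.

Lemma tail_exponent_le (a y0 s : R) (n : nat) :
  0 < y0 -> y0 <= s -> (0 < n)%N -> 10 * y0 <= a * y0 ^+ n ->
  5 * s - a * s ^+ n <= - (a * y0 ^+ n / 2).
Proof.
case: n => // n y0_gt0 y0s _; rewrite !exprS => ay0.
have s_gt0 : 0 < s := lt_le_trans y0_gt0 y0s.
have y0s_n : y0 ^+ n <= s ^+ n by rewrite lerXn2r // nnegrE ltW.
have a10 : 10 <= a * y0 ^+ n by rewrite -(ler_pM2l y0_gt0); nra.
have a_gt0 : 0 < a by rewrite -(pmulr_lgt0 _ (exprn_gt0 n y0_gt0)); lra.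
have as10 : 10 * s <= a * (s * s ^+ n).
  have : a * y0 ^+ n <= a * s ^+ n by rewrite ler_pM2l.
  nra.
have : a * (y0 * y0 ^+ n) <= a * (s * s ^+ n).
  by rewrite ler_pM2l // ler_pM ?exprn_ge0 // ltW.
lra.
Qed.

Lemma nneseries_geometric_half (r : R) :
  (\sum_(k <oo) (r / 2 ^+ k.+1)%:E = r%:E)%E.
Proof.
have := @cvg_geometric_eseries_half R r 0; rewrite expr0 divr1 => /cvg_lim <- //.
by apply: eq_eseriesr => k _; rewrite natrX addn1.
Qed.

Lemma sqr_expR_powR_le_inv (a nu : R) : 0 < a -> 0 < nu -> exists2 k, 0 < k &
  forall x, 1 <= x -> x ^+ 2 * expR (- (a * x `^ nu)) <= k / x.
Proof.
move=> a0 nu0; set r := 3 / nu.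
have r0 : 0 < r by rewrite divr_gt0.
set k := (a / r) `^ r.
have k0 : 0 < k by rewrite powR_gt0 // divr_gt0.
exists k^-1; first by rewrite invr_gt0.
move=> x x1.
have x0 : 0 < x by lra.
have hx : 0 <= x `^ nu by exact: powR_ge0.
have he : k * x ^+ 3 <= expR (a * x `^ nu).
  have -> : a * x `^ nu = (a * x `^ nu / r) * r by rewrite divfK // gt_eqF.
  rewrite expRM.
  apply: (@le_trans _ _ ((a * x `^ nu / r) `^ r)); last first.
    apply: ge0_ler_powR; rewrite ?nnegrE ?expR_ge0 ?ltW //.
    - by apply: divr_gt0 => //; apply: mulr_gt0 => //; apply: powR_gt0.
    by have := expR_ge1Dx (a * x `^ nu / r); lra.
  have -> : a * x `^ nu / r = (a / r) * x `^ nu by rewrite mulrAC.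
  have ar : 0 <= a / r by rewrite divr_ge0 // ltW.
  rewrite (powRM _ ar hx) -powRrM.
  have -> : nu * r = 3%:R by rewrite /r mulrC divfK // gt_eqF.
  by rewrite powR_mulrn // ltW.
rewrite expRN.
apply: (@le_trans _ _ (x ^+ 2 / (k * x ^+ 3))).
  apply: ler_wpM2l; first by rewrite exprn_ge0 // ltW.
  by rewrite lef_pV2 // posrE ?expR_gt0 // mulr_gt0 // exprn_gt0.
have -> : x ^+ 2 / (k * x ^+ 3) = k^-1 / x by field; rewrite !gt_eqF.
by [].
Qed.

Lemma sqr_expR_powR_near_oo (B a nu e : R) : 0 <= B -> 0 < a -> 0 < nu -> 0 < e ->
  \forall n \near \oo, B * (n%:R ^+ 2 * expR (- (a * n%:R `^ nu))) <= e.
Proof.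
move=> B0 a0 nu0 e0; have [k k0 le_k] := sqr_expR_powR_le_inv a0 nu0.
near=> n.
have n1 : 1 <= n%:R :> R by near: n; exact: nbhs_infty_ger.
have nBk : B * k / e <= n%:R by near: n; exact: nbhs_infty_ger.
apply: (@le_trans _ _ (B * (k / n%:R))); first by rewrite ler_wpM2l // le_k.
rewrite mulrA ler_pdivrMr; last by lra.
by move: nBk; rewrite ler_pdivrMr // [e * _]mulrC.
Unshelve. all: by end_near.
Qed.

Lemma exists_gt0_mulr_sqr_le (K e : R) : 0 < K -> 0 < e ->
  exists2 y0, 0 < y0 & K * y0 ^+ 2 <= e.
Proof.
move=> K_gt0 e_gt0; exists (Num.sqrt (e / K)); first by rewrite sqrtr_gt0 divr_gt0.
by rewrite sqr_sqrtr ?divr_ge0 ?(ltW e_gt0) ?(ltW K_gt0) // mulrC divfK ?gt_eqF.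
Qed.

Lemma tail_parameters_near_oo (c nu y0 B e : R) (n : nat) :
  0 < c -> 0 < nu -> 0 < y0 -> 0 <= B -> 0 < e ->
  \forall m \near \oo, 10 * y0 <= c * m%:R `^ nu * y0 ^+ n /\
    B * (m%:R ^+ 2 * expR (- (c * y0 ^+ n / 2 * m%:R `^ nu))) <= e.
Proof.
move=> c_gt0 nu_gt0 y0_gt0 B_ge0 e_gt0; near=> m; split.
  have : 10 * y0 / (c * y0 ^+ n) <= m%:R `^ nu by near: m; exact: powR_nat_near_oo.
  by rewrite ler_pdivrMr ?mulr_gt0 ?exprn_gt0 // mulrCA mulrA.
near: m; apply: sqr_expR_powR_near_oo => //.
by rewrite divr_gt0 ?mulr_gt0 ?exprn_gt0.
Unshelve. all: by end_near.
Qed.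

End RealBounds.

Section ProbabilityBounds.
Context d (T : measurableType d) (R : realType) (P : probability T R).
Local Open Scope ereal_scope.

Lemma measurable_ge_fun (f : T -> R) (r : R) :
  measurable_fun setT f -> measurable [set x | (r <= f x)%R].
Proof.
move=> mf; have := mf measurableT _ (measurable_itv `[r, +oo[).
by rewrite setTI; congr measurable; apply/seteqP; split => x /=; rewrite in_itv /= andbT.
Qed.

Lemma measurable_lt_fun (f : T -> R) (r : R) :
  measurable_fun setT f -> measurable [set x | (f x < r)%R].
Proof.
move=> mf; rewrite (_ : [set x | _] = ~` [set x | (r <= f x)%R]).
  exact/measurableC/measurable_ge_fun.
by apply/seteqP; split => x /=; rewrite ltNge => /negP.
Qed.

Lemma integral_ae_le_cst (Z : T -> \bar R) (A : set T) (r : R) :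
  measurable A -> measurable_fun setT Z -> (0 <= r)%R ->
  {ae P, forall x, Z x <= r%:E} -> \int[P]_(x in A) Z x <= r%:E.
Proof.
move=> mA mZ r0 Zr; rewrite integralE.
apply: (@le_trans _ _ (\int[P]_(x in A) Z^\+ x)).
  have Zneg_ge0 : 0 <= \int[P]_(x in A) Z^\- x.
    by apply: integral_ge0 => x _; exact: funeneg_ge0.
  by have := leeB (lexx (\int[P]_(x in A) Z^\+ x)) Zneg_ge0; rewrite sube0.
apply: (@le_trans _ _ (\int[P]_(x in A) (cst r%:E) x)).
  apply: ae_ge0_le_integral => //; first exact: measurable_funS (measurable_funepos mZ).
  by apply: filterS Zr => x Zx _; rewrite funeposE /= ge_max Zx lee_fin r0.
rewrite integral_cst // -[leRHS]mule1 lee_wpmul2l ?lee_fin //.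
exact: probability_le1.
Qed.

Lemma markov_restrict (S : T -> \bar R) (A : set T) (delta : R) :
  measurable A -> measurable_fun setT S -> (0 < delta)%R ->
  P [set x | delta%:E <= `|S x|] <= P (~` A) + (delta^-1)%:E * \int[P]_(x in A) `|S x|.
Proof.
move=> mA mS delta_gt0.
have mD : measurable [set x | delta%:E <= `|S x|].
  by rewrite -[X in measurable X]setTI; apply: emeasurable_fun_c_infty => //; exact: measurableT_comp.
apply: (@le_trans _ _ (P (A `&` [set x | delta%:E <= `|S x|] `|` ~` A))).
  apply: le_measure; rewrite ?inE //; first by apply: measurableU; [exact: measurableI|exact: measurableC].
  by move=> x Dx; have [Ax|nAx] := pselect (A x); [left|right].
apply: le_trans (measureU2 _ (measurableI _ _ mA mD) (measurableC mA)) _.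
rewrite addeC leeD2l // lee_pdivlMl //.
by apply: le_integral_abse => //; exact: measurable_funS mS.
Qed.

Lemma prob_not_both_lt_le (V X : T -> R) (a b : R) :
  measurable_fun setT V -> measurable_fun setT X ->
  P (~` ([set x | (V x < a)%R] `&` [set x | (X x < b)%R])) <=
  P [set x | a%:E <= `|(V x)%:E|] + P [set x | b%:E <= (X x)%:E].
Proof.
move=> mV mX.
have mVa : measurable [set x | a%:E <= `|(V x)%:E|].
  rewrite -[X in measurable X]setTI; apply: emeasurable_fun_c_infty => //.
  by apply/measurableT_comp => //; exact/measurable_EFinP.
have mXb : measurable [set x | b%:E <= (X x)%:E].
  by rewrite -[X in measurable X]setTI; apply: emeasurable_fun_c_infty => //; exact/measurable_EFinP.
apply: le_trans (measureU2 _ mVa mXb).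
apply: le_measure; rewrite ?inE.
- by apply/measurableC/measurableI; exact: measurable_lt_fun.
- exact: measurableU.
move=> x /= /not_andP [/negP|/negP]; rewrite -leNgt => ?; [left|right].
  by rewrite lee_fin (le_trans _ (ler_norm _)).
by rewrite lee_fin.
Qed.

Section NonnegCondExp.
Variables (G : set (set T)) (W Z : T -> \bar R).
Hypotheses (subG : Defs.sub_sigma_algebra G) (W_ge0 : forall x, 0 <= W x).
Hypothesis WZ : is_cond_exp P G W Z.

Let mZ : measurable_fun setT Z := G_measurable_fun subG WZ.1.

Let G_Z_ge0 : G [set x | 0 <= Z x].
Proof. by have := @emeasurable_itv R `[0%E, +oo[%O; rewrite set_itvE => /WZ.1. Qed.

Let G_Z_lt0 : G [set x | Z x < 0].
Proof. by have := @emeasurable_itv R `]-oo, 0%E[%O; rewrite set_itvE => /WZ.1. Qed.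

Lemma cond_exp_ge0_integral_funeneg A : G A -> \int[P]_(x in A) Z^\- x = 0.
Proof.
move=> GA; set S := A `&` [set x | Z x < 0].
have GS : G S by exact: sub_sigma_algebraI.
have ZS : \int[P]_(x in S) Z x = - \int[P]_(x in S) Z^\- x.
  rewrite integralE integral0_eq ?add0e // => x [_ /= Zx].
  by rewrite funeposE /= max_r ?ltW.
have negS0 : \int[P]_(x in S) Z^\- x = 0.
  apply/eqP; rewrite eq_le integral_ge0 ?andbT => [|x _]; last exact: funeneg_ge0.
  by rewrite -oppe_ge0 -ZS (proj2 WZ _ GS) integral_ge0.
rewrite -negS0 integral_mkcondr; apply: eq_integral => x _.
rewrite /patch; case: ifPn => // /negP; rewrite inE /= => /negP; rewrite -leNgt => Zx.
by rewrite funenegE /= max_r // oppe_le0.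
Qed.

Lemma cond_exp_ge0_integral_abs A : G A ->
  exists2 A', G A' /\ A' `<=` A & \int[P]_(x in A) `|Z x| = \int[P]_(x in A') W x.
Proof.
move=> GA; set S := A `&` [set x | 0 <= Z x].
have GS : G S by exact: sub_sigma_algebraI.
have mA := sub_sigma_algebra_measurable subG GA.
exists S => //; first by split => // x [].
rewrite (_ : (fun x => `|Z x|) = Z^\+ \+ Z^\-); last by rewrite -fune_abse.
rewrite ge0_integralD //; last 2 first.
- exact: measurable_funS (measurable_funepos mZ).
- exact: measurable_funS (measurable_funeneg mZ).
rewrite cond_exp_ge0_integral_funeneg // adde0 -(proj2 WZ _ GS) [RHS]integralE.
have -> : \int[P]_(x in S) Z^\- x = 0.
  by apply: integral0_eq => x [_ /= Zx]; rewrite funenegE /= max_r // oppe_le0.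
rewrite sube0 [RHS]integral_mkcondr; apply: eq_integral => x _.
rewrite /patch; case: ifPn => // /negP; rewrite inE /= => /negP; rewrite -ltNge => Zx.
by rewrite funeposE /= max_r ?ltW.
Qed.

End NonnegCondExp.

End ProbabilityBounds.

Section ConditionalTail.
Context d (T : measurableType d) (R : realType) (P : probability T R).
Variables (G : set (set T)) (V X Y : T -> R) (q : R -> T -> \bar R).
Variables (eps K y0 Cq a : R) (p n : nat).
Hypothesis subG : Defs.sub_sigma_algebra G.
Hypotheses (Y_ge0 : forall x, 0 <= Y x) (mY : measurable_fun setT Y).
Hypothesis q_cond : forall y, 0 < y ->
  is_cond_exp P G (fun x => (\1_[set w | y <= Y w] x)%:E) (q y).
Hypothesis q_le : {ae P, forall x y, 0 < y ->
  (q y x <= (Cq * expR (- (a * y ^+ n)))%:E)%E}.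
Hypotheses (eps_gt0 : 0 < eps) (K_gt0 : 0 < K) (y0_gt0 : 0 < y0) (Cq_ge0 : 0 <= Cq).
Hypothesis Ky0 : K * y0 ^+ 2 <= eps / 2.
Hypothesis a_large : 10 * y0 <= a * y0 ^+ n.
Hypotheses (n_gt0 : (0 < n)%N) (p_le2 : (p <= 2)%N).

Let tail_const := (1 + eps / 2 + K) ^+ 2 * expR 4.
Let level k := y0 + k%:R.
Let weight k := tail_const * expR (4 * level k).

Let level_gt0 k : 0 < level k.
Proof. by rewrite /level (lt_le_trans y0_gt0) // lerDl. Qed.

Let weight_ge0 k : 0 <= weight k.
Proof. by rewrite /weight /tail_const; apply/mulr_ge0/expR_ge0/mulr_ge0/expR_ge0/sqr_ge0. Qed.

(* On [{V < eps/2, X < K}] a large [|W|] forces [Y >= y0]; we then cut the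
   range of [Y] into the unit layers [level k <= Y < level k + 1]. *)
Lemma tail_le_weighted_levels (W : T -> R) x :
  V x < eps / 2 -> X x < K -> `|W x| <= V x + X x * Y x ^+ 2 ->
  ((`|W x| ^+ p * \1_[set w | eps <= `|W w|] x)%:E <=
   \sum_(k <oo) (weight k * \1_[set w | level k <= Y w] x)%:E)%E.
Proof.
move=> Vx Xx Wx.
have layers_ge0 : (0 <= \sum_(k <oo) (weight k * \1_[set w | level k <= Y w] x)%:E)%E.
  by apply: nneseries_ge0 => k _; rewrite lee_fin mulr_ge0.
have [epsW|Weps] := leP eps `|W x|; last first.
  by rewrite indicE memNset /= ?mulr0 //; apply/negP; rewrite -ltNge.
rewrite indicE mem_set // mulr1.
have XY : X x * Y x ^+ 2 <= K * Y x ^+ 2 by rewrite ler_wpM2r ?sqr_ge0 ?ltW.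
have y0Y : y0 <= Y x.
  rewrite leNgt; apply/negP => Yy0.
  have : K * Y x ^+ 2 <= K * y0 ^+ 2.
    apply: ler_wpM2l; first exact: ltW.
    by apply: lerXn2r; rewrite ?nnegrE ?(ltW y0_gt0) ?(ltW Yy0).
  by have := Ky0; lra.
have Yy0_ge0 : 0 <= Y x - y0 by rewrite subr_ge0.
have [levelY Ylevel] := andP (truncn_itv Yy0_ge0).
set k := Num.truncn (Y x - y0) in levelY Ylevel.
apply: le_trans (nneseries_lim_ge k.+1 _); last by move=> *; rewrite lee_fin mulr_ge0.
rewrite big_nat_recr //= indicE mem_set /level /=; last by lra.
apply: le_trans (leeDr _ _) => //; last by rewrite sume_ge0 // => *; rewrite lee_fin mulr_ge0.
rewrite mulr1 lee_fin.
have Y1 : 1 <= (1 + Y x) ^+ 2 by rewrite exprn_ege1 // lerDl.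
have YY1 : Y x ^+ 2 <= (1 + Y x) ^+ 2 by rewrite lerXn2r ?nnegrE ?addr_ge0 // lerDr.
apply: (@le_trans _ _ (((1 + eps / 2 + K) * (1 + Y x) ^+ 2) ^+ 2)).
  have e0 := eps_gt0; have K0 := K_gt0.
  by apply: exprn_le_sqr => //; nra.
rewrite exprMn -exprM /weight /tail_const -mulrA ler_wpM2l ?sqr_ge0 //.
apply: le_trans (exprD1_le_expR 4 (Y_ge0 x)) _.
by rewrite -expRD ler_expR /level; move: Ylevel; rewrite -natr1; lra.
Qed.

Lemma weight_tail_le k :
  weight k * (Cq * expR (- (a * level k ^+ n))) <=
  2 * tail_const * Cq * expR (- (a * y0 ^+ n / 2)) / 2 ^+ k.+1.
Proof.
have y0_level : y0 <= level k by rewrite /level lerDl.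
have decay : expR (4 * level k) * expR (- (a * level k ^+ n)) <=
             expR (- (a * y0 ^+ n / 2)) * (2 ^+ k)^-1.
  rewrite -expRD; apply: (@le_trans _ _ (expR (- (a * y0 ^+ n / 2) - k%:R))).
    rewrite ler_expR; have := tail_exponent_le y0_gt0 y0_level n_gt0 a_large.
    by have := y0_gt0; rewrite /level; lra.
  by rewrite expRD ler_wpM2l ?expR_ge0 // expR_Nnat_le_invX.
have -> : 2 * tail_const * Cq * expR (- (a * y0 ^+ n / 2)) / 2 ^+ k.+1 =
    tail_const * Cq * (expR (- (a * y0 ^+ n / 2)) * (2 ^+ k)^-1).
  by rewrite exprS invfM; field.
have -> : weight k * (Cq * expR (- (a * level k ^+ n))) =
    tail_const * Cq * (expR (4 * level k) * expR (- (a * level k ^+ n))).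
  by rewrite /weight; ring.
by rewrite ler_wpM2l // mulr_ge0 // /tail_const; apply/mulr_ge0/expR_ge0/sqr_ge0.
Qed.

Lemma tail_integral_le (W : T -> R) (A : set T) :
  measurable_fun setT W -> G A ->
  (forall x, A x -> V x < eps / 2 /\ X x < K) ->
  {ae P, forall x, `|W x| <= V x + X x * Y x ^+ 2} ->
  (\int[P]_(x in A) (`|W x| ^+ p * \1_[set w | eps <= `|W w|] x)%:E <=
   (2 * tail_const * Cq * expR (- (a * y0 ^+ n / 2)))%:E)%E.
Proof.
move=> mW GA AVX WVXY.
have mA := sub_sigma_algebra_measurable subG GA.
pose f k x := (weight k * \1_[set w | level k <= Y w] x)%:E.
have f_ge0 k x : (0 <= f k x)%E by rewrite lee_fin mulr_ge0.
have mf k : measurable_fun setT (f k).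
  by apply/measurable_EFinP/measurable_funM => //; exact/measurable_indic/measurable_ge_fun.
apply: (@le_trans _ _ (\int[P]_(x in A) \sum_(k <oo) f k x)%E).
  apply: ae_ge0_le_integral => //.
  - apply: measurable_funS (_ : measurable_fun setT _) => //.
    apply/measurable_EFinP/measurable_funM.
      exact/measurable_funX/measurableT_comp.
    exact/measurable_indic/measurable_ge_fun/measurableT_comp.
  - by move=> x _; apply: nneseries_ge0.
  - apply: measurable_funS (_ : measurable_fun setT _) => //.
    exact: ge0_emeasurable_sum.
  apply: filterS WVXY => x Wx Ax; have [Vx Xx] := AVX x Ax.
  exact: tail_le_weighted_levels.
rewrite integral_nneseries //; last by move=> k; exact: measurable_funS (mf k).
rewrite -nneseries_geometric_half; apply: lee_nneseries => [k _ _|k _].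
  exact: integral_ge0.
rewrite /f; under eq_integral do rewrite EFinM.
rewrite ge0_integralZl_EFin //; last exact/measurable_EFinP/measurable_indic/measurable_ge_fun.
rewrite -(proj2 (q_cond (level_gt0 k)) _ GA).
have mq := G_measurable_fun subG (q_cond (level_gt0 k)).1.
have q_level : {ae P, forall x,
    (q (level k) x <= (Cq * expR (- (a * level k ^+ n)))%:E)%E}.
  by apply: filterS q_le => x qx; exact: qx.
apply: le_trans (lee_wpmul2l _ (integral_ae_le_cst mA mq _ q_level)) _.
- by rewrite lee_fin.
- by rewrite mulr_ge0 ?expR_ge0.
by rewrite -EFinM lee_fin weight_tail_le.
Qed.

Lemma cond_tail_abs_integral_le (W : T -> R) (Z : T -> \bar R) (A : set T) :
  measurable_fun setT W -> G A ->
  (forall x, A x -> V x < eps / 2 /\ X x < K) ->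
  {ae P, forall x, `|W x| <= V x + X x * Y x ^+ 2} ->
  is_cond_exp P G (fun x => (`|W x| ^+ p * \1_[set w | eps <= `|W w|] x)%:E) Z ->
  (\int[P]_(x in A) `|Z x| <= (2 * tail_const * Cq * expR (- (a * y0 ^+ n / 2)))%:E)%E.
Proof.
move=> mW GA AVX WVXY WZ.
have W_ge0 x : (0 <= (`|W x| ^+ p * \1_[set w | eps <= `|W w|] x)%:E)%E.
  by rewrite lee_fin mulr_ge0 ?exprn_ge0.
have [A' [GA' A'A] ->] := cond_exp_ge0_integral_abs subG W_ge0 WZ GA.
by apply: tail_integral_le => // x /A'A /AVX.
Qed.

Lemma cond_tail_sum_prob_le (M : nat) (U : nat -> T -> R) (g : nat -> T -> \bar R)
    (delta : R) :
  (forall B, measurable B -> G (V @^-1` B)) ->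
  (forall B, measurable B -> G (X @^-1` B)) ->
  (forall i, measurable_fun setT (U i)) ->
  {ae P, forall x i, (i < M)%N -> `|U i x| <= V x + X x * Y x ^+ 2} ->
  (forall i, (i < M)%N -> is_cond_exp P G
     (fun x => (`|U i x| ^+ p * \1_[set w | eps <= `|U i w|] x)%:E) (g i)) ->
  0 < delta ->
  (P [set x | delta%:E <= `|\sum_(i < M) g i x|] <=
   P [set x | (eps / 2)%:E <= `|(V x)%:E|] + P [set x | K%:E <= (X x)%:E] +
   (delta^-1 * (M%:R * (2 * tail_const * Cq * expR (- (a * y0 ^+ n / 2)))))%:E)%E.
Proof.
move=> V_G X_G mU UVXY g_cond delta_gt0.
set A := [set x | V x < eps / 2] `&` [set x | X x < K].
have GA : G A.
  apply: sub_sigma_algebraI => //.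
    rewrite (_ : [set x | _] = V @^-1` `]-oo, eps / 2[); first exact: V_G.
    by apply/seteqP; split => x /=; rewrite in_itv.
  rewrite (_ : [set x | _] = X @^-1` `]-oo, K[); first exact: X_G.
  by apply/seteqP; split => x /=; rewrite in_itv.
have mA := sub_sigma_algebra_measurable subG GA.
have mg i : (i < M)%N -> measurable_fun setT (g i).
  by move=> iM; exact: (G_measurable_fun subG (g_cond i iM).1).
have mS : measurable_fun setT (fun x => \sum_(i < M) g i x)%E.
  by apply: emeasurable_sum => i; exact: mg.
apply: le_trans (markov_restrict P mA mS delta_gt0) _.
apply: leeD.
  by apply: prob_not_both_lt_le; exact: (G_preimage_measurable_fun subG).
rewrite EFinM; apply: lee_wpmul2l; first by rewrite lee_fin invr_ge0 ltW.
have g_bound i : (i < M)%N -> (\int[P]_(x in A) `|g i x| <=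
    (2 * tail_const * Cq * expR (- (a * y0 ^+ n / 2)))%:E)%E.
  move=> iM; apply: cond_tail_abs_integral_le (mU i) GA _ _ (g_cond i iM) => [x []//|].
  by apply: filterS UVXY => x; apply.
apply: (@le_trans _ _ (\sum_(i < M) \int[P]_(x in A) `|g i x|)%E).
  rewrite -ge0_integral_sum //; last first.
    by move=> i; apply: measurable_funS (measurableT_comp _ (mg i (ltn_ord i))).
  apply: ge0_le_integral => //.
  - exact: measurable_funS (measurableT_comp _ mS).
  - apply: measurable_funS (_ : measurable_fun setT _) => //.
    by apply: emeasurable_sum => i; exact: measurableT_comp _ (mg i (ltn_ord i)).
  - by move=> x _; exact: lee_abs_sum.
apply: (@le_trans _ _ (\sum_(i < M) (2 * tail_const * Cq * expR (- (a * y0 ^+ n / 2)))%:E)%E).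
  by apply: lee_sum => i _; exact: g_bound.
by rewrite sumEFin sumr_const cardE size_enum_ord lee_fin [M%:R * _]mulr_natl.
Qed.

End ConditionalTail.

Theorem mainTheorem16 (d : measure_display) (T : measurableType d)
  (R : realType) (P : probability T R)
  (F : nat -> set (set T)) (M : nat -> nat)
  (U : nat -> nat -> T -> R) (V X Y : nat -> T -> R)
  (alpha : nat) (nu c C : R) (p : nat)
  (q : nat -> R -> T -> \bar R)
  (E : nat -> nat -> T -> \bar R) :
  (* the setting *)
  filtration F ->
  (forall N, (0 < M N)%N) ->
  (forall K, exists N0, forall N, (N0 <= N)%N -> (K <= M N)%N) ->
  (forall N i, measurable_fun setT (U N i)) ->
  (forall N, cond_indep P (F N) (fun i : 'I_(M N) => U N i)) ->
  (forall N i, (i < M N)%N ->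
     cond_exp_finite P (F N) (fun x => `|U N i x|%:E)) ->
  (forall N i, (i < M N)%N -> p = 2%N ->
     cond_exp_finite P (F N) (fun x => (U N i x ^+ 2)%:E)) ->
  (* V, X, Y nonnegative random variables *)
  (forall N x, 0 <= V N x) -> (forall N x, 0 <= X N x) ->
  (forall N x, 0 <= Y N x) ->
  (forall N, measurable_fun setT (Y N)) ->
  (* (i) *)
  (forall N, {ae P, forall x, forall i, (i < M N)%N ->
     `|U N i x| <= V N x + X N x * Y N x ^+ 2}) ->
  (* (ii) *)
  (forall N B, measurable B -> F N (V N @^-1` B)) ->
  (forall N B, measurable B -> F N (X N @^-1` B)) ->
  cvg_in_prob0 P (fun N x => (V N x)%:E) ->
  tight P (fun N x => (X N x)%:E) ->
  (* (iii) *)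
  (alpha = 1%N \/ alpha = 2%N) -> 0 < nu -> 0 < c -> 0 < C ->
  (forall N y, 0 < y ->
     is_cond_exp P (F N) (fun x => (\1_[set w | y <= Y N w] x)%:E) (q N y)) ->
  {ae P, forall x, forall N (y : R), 0 < y ->
     (q N y x <= (C * (M N)%:R
        * expR (- c * ((M N)%:R `^ nu) * y ^+ (2 * alpha)))%:E)%E} ->
  (* conclusion, for p in {1,2} *)
  (p = 1%N \/ p = 2%N) ->
  (forall N i, (i < M N)%N ->
     is_cond_exp P (F N) (fun x => (`|U N i x| ^+ p)%:E) (E N i)) ->
  tight P (fun N x => (\sum_(i < M N) E N i x)%E) ->
  forall eps : R, 0 < eps ->
  forall g : nat -> nat -> T -> \bar R,
    (forall N i, (i < M N)%N ->
       is_cond_exp P (F N)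
         (fun x => (`|U N i x| ^+ p * \1_[set w | eps <= `|U N i w|] x)%:E)
         (g N i)) ->
    cvg_in_prob0 P (fun N x => (\sum_(i < M N) g N i x)%E).
Proof.
move=> F_filt _ M_oo mU _ _ _ _ _ Y_ge0 mY UVXY V_F X_F V_prob X_tight
  alpha12 nu_gt0 c_gt0 C_gt0 q_cond q_le p12 _ _ eps eps_gt0 g g_cond delta delta_gt0.
apply/nonneg_cvge0P => [N|e e_gt0]; first exact: measure_ge0.
have e3_gt0 : 0 < e / 3 by rewrite divr_gt0.
have [K K_gt0 XK] := tight_le X_tight e3_gt0.
have [y0 y0_gt0 Ky0] := exists_gt0_mulr_sqr_le K_gt0 (divr_gt0 eps_gt0 (ltr0Sn R 1)).
pose n := (2 * alpha)%N.
have n_gt0 : (0 < n)%N by rewrite /n; case: alpha12 => ->.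
pose B := delta^-1 * (2 * ((1 + eps / 2 + K) ^+ 2 * expR 4) * C).
have B_ge0 : 0 <= B.
  apply: mulr_ge0; first by rewrite invr_ge0 ltW.
  by apply: mulr_ge0 (ltW C_gt0); rewrite mulr_ge0 // mulr_ge0 ?sqr_ge0 ?expR_ge0.
have m_large := tail_parameters_near_oo n c_gt0 nu_gt0 y0_gt0 B_ge0 e3_gt0.
have /(nonneg_cvge0P (fun N => measure_ge0 P _)) /(_ _ e3_gt0) V_small :=
  V_prob _ (divr_gt0 eps_gt0 (ltr0Sn R 1)).
apply: filterS2 (near_oo_comp M_oo m_large) V_small => N [a_large bound_small] VN.
have q_le_N : {ae P, forall x y, 0 < y ->
    (q N y x <= (C * (M N)%:R * expR (- (c * (M N)%:R `^ nu * y ^+ n)))%:E)%E}.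
  by apply: filterS q_le => x qx y y_gt0; rewrite -!mulNr; exact: qx.
have p_le2 : (p <= 2)%N by case: p12 => ->.
apply: le_trans (cond_tail_sum_prob_le (F_filt.1 N) (Y_ge0 N) (mY N) (q_cond N) q_le_N
  eps_gt0 K_gt0 y0_gt0 (mulr_ge0 (ltW C_gt0) (ler0n _ _)) Ky0 a_large n_gt0 p_le2
  (V_F N) (X_F N) (mU N) (UVXY N) (g_cond N) delta_gt0) _.
have -> : c * (M N)%:R `^ nu * y0 ^+ n / 2 = c * y0 ^+ n / 2 * (M N)%:R `^ nu by ring.
have -> : delta^-1 * ((M N)%:R * (2 * ((1 + eps / 2 + K) ^+ 2 * expR 4) *
    (C * (M N)%:R) * expR (- (c * y0 ^+ n / 2 * (M N)%:R `^ nu)))) =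
    B * ((M N)%:R ^+ 2 * expR (- (c * y0 ^+ n / 2 * (M N)%:R `^ nu))) by rewrite /B; ring.
rewrite -lee_fin in bound_small.
apply: le_trans (leeD (leeD VN (XK N)) bound_small) _.
by rewrite -!EFinD lee_fin; lra.
Qed.
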